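(* For every integer $n \geq 1$, the number of linear arrangements of $\{1,\ldots,n\}$ that avoid the patterns $12, 23, \ldots, (n-1)n$ and contain the pattern $n1$ is exactly $D_{n-1}$ (with the convention $D_0 = 0$).
   Context: A linear arrangement of $\{1,\ldots,n\}$ is a sequence $a_1\cdots a_n$ in which each of $1,\ldots,n$ appears exactly once. It contains the pattern $ij$ if $a_t=i$ and $a_{t+1}=j$ for some $t$ (i.e. $i$ is immediately followed by $j$); otherwise it avoids it. $D_m$ is the number of linear arrangements of $\{1,\ldots,m\}$ avoiding all of the patterns $12, 23, \ldots, (m-1)m, m1$; $D_0 = 0$. *)

From mathcomp Require Import all_boot all_order all_fingroup.
Set Implicit Arguments. Unset Strict Implicit. Unset Printing Implicit Defensive.

(* A linear arrangement of {1,...,n} is encoded by a permutation s of 'I_n: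
   the sequence a_1 ... a_n is [seq (s t).+1 | t <- enum 'I_n]. *)
Definition arrangement (n : nat) (s : {perm 'I_n}) : seq nat :=
  [seq (s t).+1 | t <- enum 'I_n].

Definition contains_pat (a : seq nat) (i j : nat) : bool :=
  has (fun t => (nth 0 a t == i) && (nth 0 a t.+1 == j)) (iota 0 (size a).-1).

Definition avoids_succ (n : nat) (a : seq nat) : bool :=
  all (fun k => ~~ contains_pat a k k.+1) (iota 1 n.-1).

Definition D (m : nat) : nat :=
  if m is 0 then 0
  else #|[set s : {perm 'I_m} | avoids_succ m (arrangement s)
                                && ~~ contains_pat (arrangement s) m 1]|.

(* Let a be an arrangement of {1,...,n} with no succession i(i+1) that contains
   n1, say a = s1 n 1 s2, and let b = s1 1 s2 be a with n deleted.  The only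
   adjacency of b that is not one of a is (p, 1), where p is the last letter of
   s1 (if any), and it replaces the adjacencies (p, n) and (n, 1) of a.  Hence b has no
   succession i(i+1) with i < n-1, and b contains (n-1)1 exactly when a contains
   (n-1)n, which is excluded.  Conversely, inserting n just before 1 in such a b
   gives back a, so the two families are in bijection. *)

From mathcomp Require Import all_boot all_order all_fingroup zify.

Lemma contains_pat_cons z s u v :
  contains_pat (z :: s) u v = (z == u) && (ohead s == Some v) || contains_pat s u v.
Proof.
case: s => [|w s]; rewrite /contains_pat /=; first by rewrite andbF.
by rewrite -[1]/(1 + 0) iotaDl has_map.
Qed.

Lemma contains_patP a u v :
  reflect (exists s1 s2, a = s1 ++ u :: v :: s2) (contains_pat a u v).
Proof.
elim: a => [|z s IH]; first by right => -[[|? ?] [? ?]].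
rewrite contains_pat_cons.
apply: (iffP orP) => [[/andP[/eqP<-]|/IH[s1 [s2 ->]]]|[[|w s1] [s2 [-> Es]]]].
- by case: s {IH} => [|w s2] //= /eqP[->]; exists [::], s2.
- by exists (z :: s1), s2.
- by left; rewrite Es !eqxx.
- by right; apply/IH; exists s1, s2.
Qed.

Lemma contains_pat_head z s u v : v \notin s -> contains_pat (z :: s) u v = false.
Proof.
move=> vs; apply/contains_patP => -[[|w s1] [s2 [_ def_s]]]; move: vs;
  by rewrite def_s ?mem_cat !inE eqxx ?orbT.
Qed.

Lemma contains_pat_insert s1 s2 x y u v : u != x -> v != x -> v != y ->
  contains_pat (s1 ++ x :: y :: s2) u v = contains_pat (s1 ++ y :: s2) u v.
Proof.
move=> ux vx vy; elim: s1 => [|z s1 IH] /=.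
  by rewrite contains_pat_cons eq_sym (negbTE ux).
rewrite !contains_pat_cons IH; case: s1 {IH} => //=.
by rewrite !(inj_eq Some_inj) !(eq_sym _ v) (negbTE vx) (negbTE vy).
Qed.

Lemma contains_pat_insert_pred s1 s2 x y u : uniq (s1 ++ x :: y :: s2) ->
  contains_pat (s1 ++ x :: y :: s2) u x = contains_pat (s1 ++ y :: s2) u y.
Proof.
elim: s1 => [|z s1 IH] /=.
  by case/andP=> xs /andP[ys _]; rewrite !contains_pat_head.
case/andP=> _ /[dup] /IH {}IH.
rewrite !contains_pat_cons IH; case: s1 {IH} => [|w s1] /=; first by rewrite !eqxx.
rewrite mem_cat !inE !negb_or => /andP[/andP[_ /and3P[wx wy _]] _].
by rewrite !(inj_eq Some_inj) (negbTE wx) (negbTE wy).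
Qed.

Lemma iotaSr m n : iota m n.+1 = rcons (iota m n) (m + n).
Proof. by rewrite -addn1 iotaD cats1. Qed.

Lemma avoids_succ_insert m s1 s2 : 0 < m -> uniq (s1 ++ m.+1 :: 1 :: s2) ->
  avoids_succ m.+1 (s1 ++ m.+1 :: 1 :: s2)
  = avoids_succ m (s1 ++ 1 :: s2) && ~~ contains_pat (s1 ++ 1 :: s2) m 1.
Proof.
case: m => // m _ uniq_a.
rewrite /avoids_succ -[m.+2.-1]/m.+1 -[m.+1.-1]/m iotaSr -cats1 all_cat /= andbT add1n.
rewrite contains_pat_insert_pred //.
congr andb; apply: eq_in_all => k; rewrite mem_iota => /andP[k_gt0 k_le].
by rewrite contains_pat_insert //; lia.
Qed.

Definition insert_before {T : eqType} (x y : T) (s : seq T) : seq T :=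
  take (index y s) s ++ x :: drop (index y s) s.

Lemma insert_before_cat (T : eqType) (x y : T) s1 s2 :
  y \notin s1 -> insert_before x y (s1 ++ y :: s2) = s1 ++ x :: y :: s2.
Proof.
move=> ys1; rewrite /insert_before index_cat (negbTE ys1) /= eqxx addn0.
by rewrite take_size_cat // drop_size_cat.
Qed.

Lemma rem_cat_notin (T : eqType) (x : T) s1 s2 :
  x \notin s1 -> rem x (s1 ++ x :: s2) = s1 ++ s2.
Proof.
elim: s1 => [|z s1 IH] /=; first by rewrite eqxx.
by rewrite inE negb_or eq_sym => /andP[/negbTE-> /IH->].
Qed.

Lemma uniq_cat_cons_notin (T : eqType) (x : T) s1 s2 :
  uniq (s1 ++ x :: s2) -> x \notin s1.
Proof. by rewrite uniq_catC /= mem_cat negb_or => /andP[/andP[]]. Qed.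

Lemma perm_iota_insert_max n s1 s2 :
  perm_eq (s1 ++ n.+1 :: s2) (iota 1 n.+1) = perm_eq (s1 ++ s2) (iota 1 n).
Proof.
by rewrite -cat1s perm_catCA iotaSr add1n -cats1 perm_sym perm_catC perm_cons perm_sym.
Qed.

Lemma perm_iota_prefix_notin {m s1 s2} :
  perm_eq (s1 ++ 1 :: s2) (iota 1 m) -> (1 \notin s1) && (m.+1 \notin s1).
Proof.
move=> b_perm; have /uniq_cat_cons_notin-> /= : uniq (s1 ++ 1 :: s2).
  by rewrite (perm_uniq b_perm) iota_uniq.
have : m.+1 \notin iota 1 m by rewrite mem_iota add1n ltnn andbF.
by rewrite -(perm_mem b_perm) mem_cat negb_or => /andP[].
Qed.

Lemma size_uniq_bij_in {T U : eqType} {s : seq T} {t : seq U} (f : T -> U) (g : U -> T) :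
  uniq s -> uniq t ->
  {in s, forall x, f x \in t /\ g (f x) = x} ->
  {in t, forall y, g y \in s /\ f (g y) = y} ->
  size s = size t.
Proof.
move=> uniq_s uniq_t fK gK; apply/eqP; rewrite eqn_leq; apply/andP; split.
  rewrite -(size_map f s) uniq_leq_size //; last by move=> _ /mapP[x /fK[? _] ->].
  by rewrite map_inj_in_uniq // => x1 x2 /fK[_ e1] /fK[_ e2] e; rewrite -e1 -e2 e.
rewrite -(size_map g t) uniq_leq_size //; last by move=> _ /mapP[y /gK[? _] ->].
by rewrite map_inj_in_uniq // => y1 y2 /gK[_ e1] /gK[_ e2] e; rewrite -e1 -e2 e.
Qed.

Lemma arrangement_inj n : injective (@arrangement n).
Proof.
move=> s t /eq_in_map est; apply/permP => i; apply/val_inj/succn_inj.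
exact: est (mem_enum _ i).
Qed.

Lemma arrangementP n (a : seq nat) :
  reflect (exists s : {perm 'I_n}, a = arrangement s) (perm_eq a (iota 1 n)).
Proof.
have -> : iota 1 n = [tuple (val i).+1 | i < n] :> seq nat.
  by rewrite /= -[1]/(1 + 0) iotaDl -val_enum_ord -map_comp.
apply: (iffP tuple_permP) => -[s ->]; exists s; rewrite /arrangement /=;
  by apply: eq_map => i; rewrite tnth_mktuple.
Qed.

Lemma card_arrangement n (P : pred (seq nat)) :
  #|[set s : {perm 'I_n} | P (arrangement s)]| = count P (permutations (iota 1 n)).
Proof.
transitivity (count P (map (@arrangement n) (enum {perm 'I_n}))).
  rewrite count_map cardE /enum_mem size_filter count_filter.
  by apply: eq_count => s; rewrite !inE andbT.
apply/seq.permP/uniq_perm; rewrite ?permutations_uniq //.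
  by rewrite (map_inj_uniq (@arrangement_inj n)) enum_uniq.
move=> a; rewrite mem_permutations.
by apply/mapP/arrangementP => -[s]; [exists s | exists s; rewrite ?mem_enum].
Qed.

Definition succ_free_with_wrap n a := avoids_succ n a && contains_pat a n 1.
Definition cyclic_succ_free n a := avoids_succ n a && ~~ contains_pat a n 1.

Lemma succ_free_with_wrap_insert m s1 s2 : 0 < m ->
  succ_free_with_wrap m.+1 (s1 ++ m.+1 :: 1 :: s2)
    && perm_eq (s1 ++ m.+1 :: 1 :: s2) (iota 1 m.+1)
  = cyclic_succ_free m (s1 ++ 1 :: s2) && perm_eq (s1 ++ 1 :: s2) (iota 1 m).
Proof.
move=> m_gt0; rewrite perm_iota_insert_max.
have [b_perm|] := boolP (perm_eq _ _); last by rewrite !andbF.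
have a_perm : perm_eq (s1 ++ m.+1 :: 1 :: s2) (iota 1 m.+1).
  by rewrite perm_iota_insert_max.
have uniq_a : uniq (s1 ++ m.+1 :: 1 :: s2) by rewrite (perm_uniq a_perm) iota_uniq.
have wrap_a : contains_pat (s1 ++ m.+1 :: 1 :: s2) m.+1 1.
  by apply/contains_patP; exists s1, s2.
by rewrite /succ_free_with_wrap /cyclic_succ_free wrap_a avoids_succ_insert // !andbT.
Qed.

Lemma count_succ_free_with_wrap m : 0 < m ->
  count (succ_free_with_wrap m.+1) (permutations (iota 1 m.+1))
  = count (cyclic_succ_free m) (permutations (iota 1 m)).
Proof.
move=> m_gt0; rewrite -!size_filter.
apply: (size_uniq_bij_in (rem m.+1) (insert_before m.+1 1));
  rewrite ?filter_uniq ?permutations_uniq //.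
- move=> a; rewrite mem_filter mem_permutations.
  move=> /[dup] /andP[/andP[_ /contains_patP[s1 [s2 ->]]] _] {a}.
  rewrite succ_free_with_wrap_insert // => /[dup] good_b /andP[_ b_perm].
  have /andP[one_s1 max_s1] := perm_iota_prefix_notin b_perm.
  by rewrite rem_cat_notin // insert_before_cat // mem_filter mem_permutations.
- move=> b; rewrite mem_filter mem_permutations => good_b.
  have one_b : 1 \in b.
    by case/andP: good_b => _ /perm_mem->; rewrite mem_iota leqnn add1n ltnS.
  move: good_b; case/splitPr: one_b => s1 s2 /[dup] good_b /andP[_ b_perm].
  have /andP[one_s1 max_s1] := perm_iota_prefix_notin b_perm.
  rewrite insert_before_cat // rem_cat_notin //.
  by rewrite mem_filter mem_permutations succ_free_with_wrap_insert.
Qed.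

Theorem corollary2p2 (n : nat) (hn : 1 <= n) :
  #|[set s : {perm 'I_n} | avoids_succ n (arrangement s)
                          && contains_pat (arrangement s) n 1]| = D n.-1.
Proof.
case: n hn => [//|[|m]] _; first by rewrite (card_arrangement _ (succ_free_with_wrap 1)).
rewrite (card_arrangement _ (succ_free_with_wrap m.+2)) /D.
by rewrite (card_arrangement _ (cyclic_succ_free m.+1)) count_succ_free_with_wrap.
Qed.
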